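(* Let $(V,E)$ be a finite graph and $p\in[0,1]$. Define rates on $\{0,1\}^E\times\{-1,1\}^V$ as follows: if there exists $x\in V$ such that $\sigma'=\sigma^x$ and $\eta'(e)=\eta(e)$ for all $e\in E\setminus E_x$, then $c((\eta,\sigma),(\eta',\sigma'))=(1-p)^{|\{e\in E_x:\eta'(e)=0\}|}p^{|\{e\in E_x:\eta'(e)=1\}|}\mathbf 1_{(\eta',\sigma')\in\mathcal C_x}$; otherwise, for $(\eta,\sigma)\ne(\eta',\sigma')$, the rate is $0$; and $c((\eta,\sigma),(\eta,\sigma))=-\sum_{(\eta',\sigma')\ne(\eta,\sigma)}c((\eta,\sigma),(\eta',\sigma'))$. Then for any $\eta\in\{0,1\}^E$ and $\sigma,\sigma'\in\{-1,1\}^V$, the sum $\sum_{\eta'\in\{0,1\}^E}c((\eta,\sigma),(\eta',\sigma'))$ does not depend on $\eta$ and equals $$c(\sigma,\sigma')=\begin{cases}(1-p)^{|\{e\in E_x:\delta_\sigma(e)=1\}|}&\text{if }\sigma'=\sigma^x,\\ -\sum_{x\in V}(1-p)^{|\{e\in E_x:\delta_\sigma(e)=1\}|}&\text{if }\sigma'=\sigma,\\ 0&\text{otherwise.}\end{cases}$$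
   Context: Edge configurations $\eta\in\{0,1\}^E$, spin configurations $\sigma\in\{-1,1\}^V$. For $e=\langle x,y\rangle$, $\delta_\sigma(e)=\mathbf 1_{\sigma(x)=\sigma(y)}$. $E_x$ is the set of edges with endvertex $x$; $\sigma^x$ is $\sigma$ with the spin at $x$ flipped. $\mathcal C_x=\{(\eta,\sigma):\eta(e)\le\delta_\sigma(e)\text{ for all }e\in E_x\}$. *)

From HB Require Import structures.
From mathcomp Require Import all_boot all_order all_algebra.
Set Implicit Arguments. Unset Strict Implicit. Unset Printing Implicit Defensive.
Import Order.TTheory GRing.Theory Num.Theory.
Local Open Scope ring_scope.

(* Spins in {-1,1} are encoded as booleans (true = +1, false = -1);
   only equality of spins and spin flips are used. *)
Section Defs.
Variables (R : pzRingType) (V E : finType) (src tgt : E -> V).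

Definition econf := {ffun E -> bool}.
Definition sconf := {ffun V -> bool}.

Definition incident (x : V) (e : E) : bool := (src e == x) || (tgt e == x).

Definition delta (s : sconf) (e : E) : bool := s (src e) == s (tgt e).

Definition flip (s : sconf) (x : V) : sconf :=
  [ffun y => if y == x then ~~ s y else s y].

(* (eta, sigma) \in C_x ; eta(e) <= delta(e) on {0,1} is implication *)
Definition inC (x : V) (eta : econf) (s : sconf) : bool :=
  [forall e, incident x e ==> (eta e ==> delta s e)].

Definition rate_off (p : R) (eta : econf) (s : sconf) (eta' : econf) (s' : sconf) : R :=
  match [pick x | (s' == flip s x) &&
                  [forall e, ~~ incident x e ==> (eta' e == eta e)]] with
  | Some x =>
      (1 - p) ^+ #|[set e | incident x e & ~~ eta' e]|
      * p ^+ #|[set e | incident x e & eta' e]|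
      * (inC x eta' s')%:R
  | None => 0
  end.

Definition rate (p : R) (st st' : econf * sconf) : R :=
  if st' == st then
    - \sum_(st'' : econf * sconf | st'' != st) rate_off p st.1 st.2 st''.1 st''.2
  else rate_off p st.1 st.2 st'.1 st'.2.

Definition cspin (p : R) (s s' : sconf) : R :=
  match [pick x | s' == flip s x] with
  | Some x => (1 - p) ^+ #|[set e | incident x e & delta s e]|
  | None =>
      if s' == s then
        - \sum_(x : V) (1 - p) ^+ #|[set e | incident x e & delta s e]|
      else 0
  end.
End Defs.

From HB Require Import structures.
From mathcomp Require Import all_boot all_order all_algebra.
Set Implicit Arguments.
Unset Strict Implicit.

Import Order.TTheory GRing.Theory Num.Theory.
Local Open Scope ring_scope.

(* The rate to (eta', sigma^x) is a
   product over edges: off E_x a factor 1_{eta'(e) = eta(e)}, on E_x a factor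
   p or 1 - p according to eta'(e), killed when eta'(e) = 1 but e becomes
   disagreeing after the flip, i.e. when delta_sigma(e) = 1.  Summing the
   product over eta' sums each factor over {0,1} independently, which gives
   1 off E_x, 1 - p on the agreeing edges of E_x and 1 on the others.  The
   diagonal case then follows by summing over x. *)

Lemma prodr_natb (R : comPzSemiRingType) (I : finType) (P b : pred I) :
  \prod_(i | P i) (b i)%:R = [forall i, P i ==> b i]%:R :> R.
Proof.
have [/forallP Pb | /forallPn[i]] := boolP [forall i, P i ==> b i].
  by apply: big1 => i /(implyP (Pb i)) ->.
by rewrite negb_imply => /andP[Pi /negbTE bi]; rewrite (bigD1 i) //= bi mul0r.
Qed.

Lemma prodr_if_const (R : comPzSemiRingType) (I : finType) (P b : pred I) (a c : R) :
  \prod_(i | P i) (if b i then a else c) =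
  a ^+ #|[set i | P i & b i]| * c ^+ #|[set i | P i & ~~ b i]|.
Proof.
rewrite (bigID b) /= -!prodr_const !big_set /=.
by congr (_ * _); apply: eq_bigr => i /andP[_ /= bi]; rewrite ?bi ?(negbTE bi).
Qed.

Section Flip.
Variables (V E : finType) (src tgt : E -> V).

Lemma flip_inj (s : sconf V) : injective (flip s).
Proof.
move=> x y /(congr1 (fun f : sconf V => f x)); rewrite !ffunE eqxx.
by case: eqVneq => // _; case: (s x).
Qed.

Lemma flip_neq (s : sconf V) x : flip s x != s.
Proof.
by apply/eqP => /(congr1 (fun f : sconf V => f x)); rewrite ffunE eqxx; case: (s x).
Qed.

Hypothesis no_loops : forall e, src e != tgt e.

Lemma delta_flip (s : sconf V) x e : incident src tgt x e ->
  delta src tgt (flip s x) e = ~~ delta src tgt s e.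
Proof.
rewrite /incident /delta !ffunE => /orP[]/eqP xe; have := no_loops e; rewrite xe.
  by rewrite eq_sym eqxx => /negbTE->; case: (s x); case: (s _).
by rewrite eqxx => /negbTE->; case: (s x); case: (s _).
Qed.

End Flip.

Section Rates.
Variables (R : comPzRingType) (V E : finType) (src tgt : E -> V).
Hypothesis no_loops : forall e, src e != tgt e.
Variables (p : R) (eta : econf E) (s : sconf V).

Local Notation incident := (incident src tgt).
Local Notation delta := (delta src tgt).
Local Notation rate_off := (rate_off src tgt p).
Local Notation rate := (rate src tgt p).

Definition jump_rate x (eta' : econf E) (s' : sconf V) : R :=
  (1 - p) ^+ #|[set e | incident x e & ~~ eta' e]|
  * p ^+ #|[set e | incident x e & eta' e]| * (inC src tgt x eta' s')%:R.

Lemma rate_off_flip x eta' : rate_off eta s eta' (flip s x) =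
  [forall e, ~~ incident x e ==> (eta' e == eta e)]%:R * jump_rate x eta' (flip s x).
Proof.
rewrite /rate_off; case: pickP => [y /andP[/eqP /flip_inj <- ->] | no_pick].
  by rewrite mul1r.
by have := no_pick x; rewrite eqxx /= => ->; rewrite mul0r.
Qed.

Lemma rate_off_eq0 eta' s' : (forall x, s' != flip s x) -> rate_off eta s eta' s' = 0.
Proof.
move=> not_flip; rewrite /rate_off; case: pickP => // y /andP[].
by rewrite (negbTE (not_flip y)).
Qed.

Lemma rate_off_to_self eta' : rate_off eta s eta' s = 0.
Proof. by apply: rate_off_eq0 => x; rewrite eq_sym flip_neq. Qed.

Lemma jump_rate_flip x eta' : jump_rate x eta' (flip s x) =
  \prod_(e | incident x e) (if eta' e then (if delta s e then 0 else p) else 1 - p).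
Proof.
have inC_flip : inC src tgt x eta' (flip s x) =
    [forall e, incident x e ==> ~~ (eta' e && delta s e)].
  apply: eq_forallb => e; case: (boolP (incident x e)) => //= xe.
  by rewrite (delta_flip no_loops _ xe); case: (eta' e).
rewrite (eq_bigr (fun e => (if eta' e then p else 1 - p) * (~~ (eta' e && delta s e))%:R));
  last by move=> e _; case: (eta' e); case: (delta s e); rewrite ?mulr1 ?mulr0.
rewrite big_split /= prodr_natb prodr_if_const -inC_flip.
by congr (_ * _); apply: mulrC.
Qed.

Definition edge_weight x e (b : bool) : R :=
  if incident x e then (if b then (if delta s e then 0 else p) else 1 - p)
  else (b == eta e)%:R.

Lemma rate_off_flip_prod x eta' :
  rate_off eta s eta' (flip s x) = \prod_e edge_weight x e (eta' e).
Proof.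
rewrite rate_off_flip jump_rate_flip [RHS](bigID (incident x)) /= mulrC; congr (_ * _).
  by apply: eq_bigr => e xe; rewrite /edge_weight xe.
by rewrite -prodr_natb; apply: eq_bigr => e /negbTE xe; rewrite /edge_weight xe.
Qed.

Lemma sum_edge_weight x e :
  \sum_b edge_weight x e b = if incident x e && delta s e then 1 - p else 1.
Proof.
rewrite big_bool /edge_weight.
by case: (incident x e); case: (delta s e); case: (eta e); rewrite /= ?add0r ?addr0 ?subrKC.
Qed.

Lemma sum_rate_off_flip x : \sum_(eta' : econf E) rate_off eta s eta' (flip s x) =
  (1 - p) ^+ #|[set e | incident x e & delta s e]|.
Proof.
under eq_bigr do rewrite rate_off_flip_prod.
rewrite -bigA_distr_bigA /=; under eq_bigr do rewrite sum_edge_weight.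
by rewrite -big_mkcond -prodr_const big_set.
Qed.

Lemma sum_rate_off :
  \sum_(st : econf E * sconf V) rate_off eta s st.1 st.2 =
  \sum_x (1 - p) ^+ #|[set e | incident x e & delta s e]|.
Proof.
rewrite -(pair_big xpredT xpredT (fun eta' s' => rate_off eta s eta' s')) exchange_big /=.
rewrite (bigID [in [set flip s x | x : V]]) /= [X in _ + X]big1 ?addr0; last first.
  move=> s' s'_nflip; apply: big1 => eta' _; apply: rate_off_eq0 => x.
  by apply: contraNneq s'_nflip => ->; apply: imset_f.
rewrite big_imset /=; last by move=> x y _ _; apply: flip_inj.
by apply: eq_big => [x | x _]; rewrite ?in_setT ?sum_rate_off_flip.
Qed.

Lemma rate_offdiag eta' s' :
  (eta', s') != (eta, s) -> rate (eta, s) (eta', s') = rate_off eta s eta' s'.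
Proof. by rewrite /rate => /negbTE->. Qed.

Lemma rate_diag :
  rate (eta, s) (eta, s) = - \sum_x (1 - p) ^+ #|[set e | incident x e & delta s e]|.
Proof.
by rewrite /rate eqxx -sum_rate_off [in RHS](bigD1 (eta, s)) //= rate_off_to_self add0r.
Qed.

End Rates.

Theorem proposition5 (R : realFieldType) (V E : finType) (src tgt : E -> V)
  (no_loops : forall e : E, src e != tgt e)
  (p : R) (hp : 0 <= p <= 1)
  (eta : econf E) (s s' : sconf V) :
  \sum_(eta' : econf E) rate src tgt p (eta, s) (eta', s') = cspin src tgt p s s'.
Proof.
rewrite /cspin; case: pickP => [x /eqP-> | not_flip].
  rewrite -(sum_rate_off_flip no_loops p eta s x).
  apply: eq_bigr => eta' _.
  by rewrite rate_offdiag ?xpair_eqE ?(negbTE (flip_neq _ _)) ?andbF.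
have s'_nflip x : s' != flip s x by rewrite not_flip.
case: eqVneq => [-> | s'_neq_s].
  rewrite (bigD1 eta) //= big1 ?addr0 ?rate_diag // => eta' eta'_neq_eta.
  by rewrite rate_offdiag ?xpair_eqE ?(negbTE eta'_neq_eta) ?rate_off_to_self.
apply: big1 => eta' _.
rewrite rate_offdiag ?xpair_eqE ?(negbTE s'_neq_s) ?andbF //; exact: rate_off_eq0.
Qed.
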